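(* Let $\Bbbk$ be a field, $A$ a $\Bbbk$-algebra, $\Gamma$ a subalgebra, and $\sim$ an equivalence relation on $\mathrm{cfs}(\Gamma)$ such that $\Gamma$ is a strong Harish-Chandra block subalgebra of $A$ with respect to $\sim$. Let $B\in\mathrm{cfs}(\Gamma)/{\sim}$. Suppose $B$ is finite, $\Gamma$ is noetherian, and $\mathcal A(B,B)$ is finitely generated as a left and as a right $\hat\Gamma_B$-module. Then: (i) there are finitely many isomorphism classes of simple Harish-Chandra block modules $V$ with $B\in\mathrm{Supp}(V)$; (ii) if $V$ is a simple Harish-Chandra block module, then $V(B)$ is finite-dimensional.
   Context: All algebras are associative unital $\Bbbk$-algebras. $\mathrm{cfs}(\Gamma)$ is the set of maximal two-sided ideals $\mathfrak m$ with $\dim\Gamma/\mathfrak m<\infty$. For a class $B$, $\mathcal W(B)=\{\mathfrak m_1\cdots\mathfrak m_k:k\ge0,\ \mathfrak m_i\in B\}$. For a left $\Gamma$-module $V$, $V(B)=\{v:\mathfrak mv=0$ for some $\mathfrak m\in\mathcal W(B)\}$ (analogously for right modules); $V$ is a block module if $V=\bigoplus_BV(B)$, $\mathrm{Supp}(V)=\{B:V(B)\ne0\}$, and a strong block module if also each $V(B)$ is killed by some $\mathfrak m\in\mathcal W(B)$. A Harish-Chandra block module is an $A$-module that is a block module over $\Gamma$. $\Gamma$ is a strong Harish-Chandra block subalgebra of $A$ if for all $B$ and $\mathfrak m\in\mathcal W(B)$, the left $A$-module $A/A\mathfrak m$ and the right module $A/\mathfrak mA$ are strong block modules over $\Gamma$.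 $\hat\Gamma_B=\varprojlim_{\mathfrak m\in\mathcal W(B)}\Gamma/\mathfrak m$ and $\mathcal A(B,B)=\varprojlim_{\mathfrak n,\mathfrak m\in\mathcal W(B)}A/(\mathfrak nA+A\mathfrak m)$, which is a $(\hat\Gamma_B,\hat\Gamma_B)$-bimodule via the natural actions of $\Gamma/\mathfrak n$ on the left and $\Gamma/\mathfrak m$ on the right of $A/(\mathfrak nA+A\mathfrak m)$. *)

From HB Require Import structures.
From mathcomp Require Import all_boot all_order all_algebra.
Set Implicit Arguments. Unset Strict Implicit. Unset Printing Implicit Defensive.
Import GRing.Theory.
Local Open Scope ring_scope.

Section HCDefs.
Variables (k : fieldType) (A : algType k).
Implicit Types (G I J m : A -> Prop).

Definition incl (I J : A -> Prop) := forall x, I x -> J x.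

Definition is_subalg G :=
  [/\ G 1, (forall x y, G x -> G y -> G (x + y)), (forall x, G x -> G (- x)),
      (forall x y, G x -> G y -> G (x * y)) & (forall (c : k) x, G x -> G (c *: x))].

Definition is_addsub I :=
  [/\ I 0, (forall x y, I x -> I y -> I (x + y)) & (forall x, I x -> I (- x))].
Definition left_ideal G I :=
  [/\ incl I G, is_addsub I & (forall g x, G g -> I x -> I (g * x))].
Definition right_ideal G I :=
  [/\ incl I G, is_addsub I & (forall g x, G g -> I x -> I (x * g))].
Definition ideal2 G I := left_ideal G I /\ right_ideal G I.

(* dim G/I < oo : G is spanned modulo I by finitely many elements *)
Definition fin_codim G I :=
  exists (n : nat) (e : 'I_n -> A), (forall i, G (e i)) /\
    forall x, G x -> exists c : 'I_n -> k, I (x - \sum_(i < n) c i *: e i).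

(* cfs(G): maximal two-sided ideals of finite codimension *)
Definition cfs G m :=
  [/\ ideal2 G m, ~ m 1,
      (forall J, ideal2 G J -> incl m J -> incl J m \/ incl G J)
    & fin_codim G m].

Definition equiv_on_cfs G (rel : (A -> Prop) -> (A -> Prop) -> Prop) :=
  [/\ (forall m, cfs G m -> rel m m),
      (forall m n, cfs G m -> cfs G n -> rel m n -> rel n m)
    & (forall m n p, cfs G m -> cfs G n -> cfs G p -> rel m n -> rel n p -> rel m p)].

Definition cls G rel (r : A -> Prop) : (A -> Prop) -> Prop :=
  fun m => cfs G m /\ rel m r.

Definition idealMul I J : A -> Prop := fun z =>
  exists (n : nat) (x y : 'I_n -> A),
    (forall i, I (x i) /\ J (y i)) /\ z = \sum_(i < n) x i * y i.

Definition prodI G (s : seq (A -> Prop)) : A -> Prop := foldr idealMul G s.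

Fixpoint allP (P : (A -> Prop) -> Prop) (s : seq (A -> Prop)) : Prop :=
  if s is J :: s' then P J /\ allP P s' else True.

(* I \in W(Bc) : I is a product m_1 ... m_k (k >= 0) of ideals of Bc *)
Definition Wset G (Bc : (A -> Prop) -> Prop) I :=
  exists s, allP Bc s /\ forall x, I x <-> prodI G s x.

Definition leftGen I : A -> Prop := fun z =>
  exists (n : nat) (a x : 'I_n -> A), (forall i, I (x i)) /\ z = \sum_(i < n) a i * x i.
Definition rightGen I : A -> Prop := fun z =>
  exists (n : nat) (a x : 'I_n -> A), (forall i, I (x i)) /\ z = \sum_(i < n) x i * a i.
Definition biGen I J : A -> Prop := fun z =>
  exists u w, rightGen I u /\ leftGen J w /\ z = u + w.

(* Block-module notions for the G-module M/N, where G acts on M via act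
   (act x v is the action of x in G, on the left or on the right), and
   N is the submodule we quotient by. *)
Section Block.
Variables (M : zmodType) (act : A -> M -> M) (N : M -> Prop).

Definition kills I (v : M) := forall x, I x -> N (act x v).

(* v is in V(B) where B is the class of r *)
Definition part G rel (r : A -> Prop) (v : M) :=
  exists I, Wset G (cls G rel r) I /\ kills I v.

Definition is_block G rel :=
  (forall v : M, exists (n : nat) (r : 'I_n -> A -> Prop) (w : 'I_n -> M),
     [/\ (forall i, cfs G (r i)), (forall i j, i != j -> ~ rel (r i) (r j)),
         (forall i, part G rel (r i) (w i)) & N (v - \sum_(i < n) w i)]) /\
  (forall (n : nat) (r : 'I_n -> A -> Prop) (w : 'I_n -> M),
     (forall i, cfs G (r i)) -> (forall i j, i != j -> ~ rel (r i) (r j)) ->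
     (forall i, part G rel (r i) (w i)) -> N (\sum_(i < n) w i) ->
     forall i, N (w i)).

Definition is_strong_block G rel :=
  is_block G rel /\
  forall r, cfs G r -> exists I, Wset G (cls G rel r) I /\
     forall v, part G rel r v -> kills I v.

Definition in_supp G rel (r : A -> Prop) :=
  exists v, part G rel r v /\ ~ N v.
End Block.

Definition strong_HC_block_subalg G rel :=
  forall r, cfs G r -> forall I, Wset G (cls G rel r) I ->
    is_strong_block (fun x (a : A) => x * a) (leftGen I) G rel /\
    is_strong_block (fun x (a : A) => a * x) (rightGen I) G rel.

Definition noetherian G :=
  (forall C : nat -> A -> Prop, (forall n, left_ideal G (C n)) ->
     (forall n, incl (C n) (C n.+1)) -> exists n0, forall n, incl (C n) (C n0)) /\
  (forall C : nat -> A -> Prop, (forall n, right_ideal G (C n)) ->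
     (forall n, incl (C n) (C n.+1)) -> exists n0, forall n, incl (C n) (C n0)).

Definition finite_class G rel r :=
  exists (n : nat) (ms : 'I_n -> A -> Prop),
    forall m, cls G rel r m -> exists i, forall x, m x <-> ms i x.

(* Completion hat(G)_B = lim_{I in W(B)} G/I : elements are compatible
   families of representatives f I in G (modulo I). *)
Definition hatG_el G Bc (f : (A -> Prop) -> A) :=
  (forall I, Wset G Bc I -> G (f I)) /\
  (forall I J, Wset G Bc I -> Wset G Bc J -> incl I J -> J (f I - f J)).

(* A(B,B) = lim_{n,m in W(B)} A/(nA + Am) *)
Definition ABB_el G Bc (F : (A -> Prop) -> (A -> Prop) -> A) :=
  forall n m n' m', Wset G Bc n -> Wset G Bc m -> Wset G Bc n' -> Wset G Bc m' ->
    incl n n' -> incl m m' -> biGen n' m' (F n m - F n' m').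

Definition ABB_eq G Bc (F F' : (A -> Prop) -> (A -> Prop) -> A) :=
  forall n m, Wset G Bc n -> Wset G Bc m -> biGen n m (F n m - F' n m).

Definition ABB_fg_left G Bc :=
  exists (r : nat) (E : 'I_r -> (A -> Prop) -> (A -> Prop) -> A),
    (forall i, ABB_el G Bc (E i)) /\
    forall F, ABB_el G Bc F -> exists c : 'I_r -> (A -> Prop) -> A,
      (forall i, hatG_el G Bc (c i)) /\
      ABB_eq G Bc F (fun n m => \sum_(i < r) c i n * E i n m).

Definition ABB_fg_right G Bc :=
  exists (r : nat) (E : 'I_r -> (A -> Prop) -> (A -> Prop) -> A),
    (forall i, ABB_el G Bc (E i)) /\
    forall F, ABB_el G Bc F -> exists c : 'I_r -> (A -> Prop) -> A,
      (forall i, hatG_el G Bc (c i)) /\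
      ABB_eq G Bc F (fun n m => \sum_(i < r) E i n m * c i m).

Definition submod (V : lmodType A) (U : V -> Prop) :=
  [/\ U 0, (forall u v, U u -> U v -> U (u + v)) & (forall (a : A) u, U u -> U (a *: u))].

Definition simple_mod (V : lmodType A) :=
  (exists v : V, v != 0) /\
  forall U : V -> Prop, submod U -> (forall v, U v -> v = 0) \/ (forall v, U v).

Definition mod_iso (V W : lmodType A) :=
  exists f : V -> W, [/\ (forall u v, f (u + v) = f u + f v),
                         (forall (a : A) v, f (a *: v) = a *: f v) & bijective f].

Definition modact (V : lmodType A) : A -> V -> V := fun x v => x *: v.
Definition is0 (V : lmodType A) : V -> Prop := fun v => v = 0.

Definition HC_block_mod G rel (V : lmodType A) :=
  is_block (@modact V) (@is0 V) G rel.

Definition part_findim G rel r (V : lmodType A) :=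
  exists (n : nat) (e : 'I_n -> V), forall v, part (@modact V) (@is0 V) G rel r v ->
    exists c : 'I_n -> k, v = \sum_(i < n) (c i)%:A *: e i.

End HCDefs.

(* Let J be the product of the finitely many ideals of the block B. A simple
   Harish-Chandra block module V with V(B) <> 0 contains a vector u <> 0 with J u = 0,
   so V = A u is a quotient of A/AJ. The strong block property of A/AJ gives I in W(B)
   annihilating (A/AJ)(B), and hence V(B). As I has finite codimension (Gamma is
   noetherian), finite generation of A(B,B) over the completion yields q_1, ..., q_n
   with A = span(q_i) + IA + AJ. Projecting onto V(B), the vectors q_i u span V(B), so
   dim V(B) <= n. Finally, by the density theorem, pairwise non-isomorphic such modules
   V_1, ..., V_t admit a_l in A acting on the chosen u_j as the Kronecker delta; their
   coordinates along the q_i are linearly independent, so t <= n. *)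

From HB Require Import structures.
From mathcomp Require Import all_boot all_order all_algebra.
From mathcomp Require Import boolp.
Set Implicit Arguments. Unset Strict Implicit. Unset Printing Implicit Defensive.
Import GRing.Theory.
Local Open Scope ring_scope.

Section FiniteSums.
Variables (k : fieldType) (A : algType k).
Implicit Types (P Q I J : A -> Prop).

Definition sums P z := exists s : seq A, (forall x, x \in s -> P x) /\ z = \sum_(x <- s) x.

Lemma sums0 P : sums P 0.
Proof. by exists [::]; rewrite big_nil. Qed.

Lemma sums1 P x : P x -> sums P x.
Proof. by move=> Px; exists [:: x]; rewrite big_seq1; split=> // y; rewrite inE => /eqP->. Qed.

Lemma sumsD P x y : sums P x -> sums P y -> sums P (x + y).
Proof.
move=> [s [sP ->]] [t [tP ->]]; exists (s ++ t); rewrite big_cat; split=> // z.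
by rewrite mem_cat => /orP[/sP|/tP].
Qed.

Lemma sums_big P (I : Type) (r : seq I) (F : I -> A) :
  (forall i, sums P (F i)) -> sums P (\sum_(i <- r) F i).
Proof.
move=> FP; elim: r => [|i r IH]; first by rewrite big_nil; apply: sums0.
by rewrite big_cons; apply: sumsD.
Qed.

Lemma sums_ind P Q : Q 0 -> (forall x y, Q x -> Q y -> Q (x + y)) ->
  (forall x, P x -> Q x) -> forall z, sums P z -> Q z.
Proof.
move=> Q0 QD PQ z [s [sP ->]]; elim: s sP => [|a s IH] sP; first by rewrite big_nil.
rewrite big_cons; apply: QD; first by apply/PQ/sP; rewrite inE eqxx.
by apply: IH => x sx; apply: sP; rewrite inE sx orbT.
Qed.

Lemma sums_morph P Q (f : A -> A) : f 0 = 0 -> {morph f : x y / x + y} ->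
  (forall x, P x -> Q (f x)) -> forall z, sums P z -> sums Q (f z).
Proof.
move=> f0 fD PQ; apply: sums_ind => [|x y|x Px]; first by rewrite f0; apply: sums0.
  by rewrite fD; apply: sumsD.
by apply/sums1/PQ.
Qed.

Lemma indexed_sumsE (R : A -> A -> Prop) (op : A -> A -> A) z :
  (exists n (a b : 'I_n -> A), (forall i, R (a i) (b i)) /\ z = \sum_(i < n) op (a i) (b i))
  <-> sums (fun y => exists a b, R a b /\ y = op a b) z.
Proof.
split=> [[n [a [b [Rab ->]]]]|[s [sR ->]]].
  by apply: sums_big => i; apply: sums1; exists (a i), (b i).
have /fin_all_exists[ab Hab] : forall i : 'I_(size s),
    exists ab : A * A, R ab.1 ab.2 /\ nth 0 s i = op ab.1 ab.2.
  by move=> i; have [a [b [Rab ->]]] := sR _ (mem_nth 0 (ltn_ord i)); exists (a, b).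
exists (size s), (fun i => (ab i).1), (fun i => (ab i).2); split=> [i|]; first by case: (Hab i).
by rewrite (big_nth 0) big_mkord; apply: eq_bigr => i _; case: (Hab i).
Qed.

Lemma leftGenE I z : leftGen I z <-> sums (fun y => exists a x, I x /\ y = a * x) z.
Proof. exact: (@indexed_sumsE (fun _ x => I x) (fun a x => a * x)). Qed.

Lemma rightGenE I z : rightGen I z <-> sums (fun y => exists a x, I x /\ y = x * a) z.
Proof. exact: (@indexed_sumsE (fun _ x => I x) (fun a x => x * a)). Qed.

Lemma idealMulE I J z :
  idealMul I J z <-> sums (fun y => exists x w, (I x /\ J w) /\ y = x * w) z.
Proof. exact: (@indexed_sumsE (fun x w => I x /\ J w) (fun x w => x * w)). Qed.

Lemma idealMul_mem I J x y : I x -> J y -> idealMul I J (x * y).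
Proof. by move=> Ix Jy; exists 1%N, (fun=> x), (fun=> y); rewrite big_ord1. Qed.

Lemma idealMulS I J J' : incl J J' -> incl (idealMul I J) (idealMul I J').
Proof.
move=> JJ' z [n [x [y [xy ->]]]]; exists n, x, y; split=> // i.
by case: (xy i) => Ix Jy; split=> //; apply: JJ'.
Qed.

Lemma leftGen_kills (V : lmodType A) I (u : V) :
  (forall x, I x -> x *: u = 0) -> forall y, leftGen I y -> y *: u = 0.
Proof.
move=> Iu _ [n [a [x [Ix ->]]]]; rewrite scaler_suml big1 // => i _.
by rewrite -scalerA Iu // scaler0.
Qed.

End FiniteSums.

Section Ideals.
Variables (k : fieldType) (A : algType k) (G : A -> Prop).
Implicit Types (I J m : A -> Prop).

Lemma addsub_sums I P : is_addsub I -> (forall x, P x -> I x) -> forall z, sums P z -> I z.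
Proof. by case=> I0 ID _; apply: sums_ind. Qed.

Lemma idealMul_subr I J : left_ideal G J -> incl I G -> incl (idealMul I J) J.
Proof.
move=> [_ Jadd Jmul] IG z /idealMulE; apply: addsub_sums => // _ [x [w [[Ix Jw] ->]]].
exact/Jmul/Jw/IG.
Qed.

Lemma idealMul_subl I J : right_ideal G I -> incl J G -> incl (idealMul I J) I.
Proof.
move=> [_ Iadd Imul] JG z /idealMulE; apply: addsub_sums => // _ [x [w [[Ix Jw] ->]]].
exact/Imul/Ix/JG.
Qed.

Lemma idealMul_ideal2 I J : ideal2 G I -> ideal2 G J -> ideal2 G (idealMul I J).
Proof.
move=> [[IG [_ _ IN] Il] Ir] [Jl [JG _ Jr]].
set gen := fun y => exists x w, (I x /\ J w) /\ y = x * w.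
have stable (f : A -> A) : f 0 = 0 -> {morph f : x y / x + y} ->
    (forall x w, I x -> J w -> gen (f (x * w))) ->
    forall z, idealMul I J z -> idealMul I J (f z).
  move=> f0 fD fgen z /idealMulE Sz; apply/idealMulE.
  by apply: (sums_morph f0 fD _ Sz) => _ [x [w [[Ix Jw] ->]]]; apply: fgen.
have mulG : incl (idealMul I J) G.
  by move=> z /(idealMul_subr Jl IG); case: Jl => JG' _ _; apply: JG'.
have addIJ : is_addsub (idealMul I J).
  split=> [|x y /idealMulE Sx /idealMulE Sy|]; first exact/idealMulE/sums0.
    exact/idealMulE/sumsD.
  apply: stable => [|x y|x w Ix Jw]; [exact: oppr0|exact: opprD|].
  by exists (- x), w; rewrite mulNr; split=> //; split=> //; apply: IN.
split; split=> // g z Gg.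
- apply: stable => [|x y|x w Ix Jw]; [exact: mulr0|exact: mulrDr|].
  by exists (g * x), w; rewrite mulrA; split=> //; split=> //; apply: Il.
- apply: (stable (fun x => x * g)) => [|x y|x w Ix Jw]; [exact: mul0r|exact: mulrDl|].
  by exists x, (w * g); rewrite mulrA; split=> //; split=> //; apply: Jr.
Qed.

Lemma allP_mono (P Q : (A -> Prop) -> Prop) s :
  (forall m, P m -> Q m) -> allP P s -> allP Q s.
Proof. by move=> PQ; elim: s => //= m s IH [Pm Ps]; split; [apply: PQ|apply: IH]. Qed.

Lemma allP_cat (P : (A -> Prop) -> Prop) s t : allP P (s ++ t) <-> allP P s /\ allP P t.
Proof. by elim: s => [|m s IH] /=; [tauto|rewrite IH; tauto]. Qed.

End Ideals.

Section Subalgebra.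
Variables (k : fieldType) (A : algType k) (G : A -> Prop).
Hypothesis HG : is_subalg G.
Implicit Types (I J m : A -> Prop).

Lemma subalg1 : G 1. Proof. by case: HG. Qed.
Lemma subalgD x y : G x -> G y -> G (x + y). Proof. by case: HG => _ GD _ _ _; apply: GD. Qed.
Lemma subalgN x : G x -> G (- x). Proof. by case: HG => _ _ GN _ _; apply: GN. Qed.
Lemma subalgM x y : G x -> G y -> G (x * y). Proof. by case: HG => _ _ _ GM _; apply: GM. Qed.
Lemma subalgZ c x : G x -> G (c *: x). Proof. by case: HG => _ _ _ _ GZ; apply: GZ. Qed.
Lemma subalg0 : G 0. Proof. by rewrite -(subrr 1); apply/subalgD/subalgN/subalg1/subalg1. Qed.
Lemma subalg_scalar c : G c%:A. Proof. exact/subalgZ/subalg1. Qed.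

Lemma subalg_sum (T : Type) (r : seq T) (F : T -> A) :
  (forall i, G (F i)) -> G (\sum_(i <- r) F i).
Proof.
move=> GF; elim: r => [|i r IH]; first by rewrite big_nil; apply: subalg0.
by rewrite big_cons; apply: subalgD.
Qed.

Lemma ideal2G : ideal2 G G.
Proof.
have GG : is_addsub G by split; [apply: subalg0|apply: subalgD|apply: subalgN].
by split; split=> // g x Gg Gx; apply: subalgM.
Qed.

Lemma prodI_ideal2 s : allP (ideal2 G) s -> ideal2 G (prodI G s).
Proof.
elim: s => [|m s IH] /=; first by move=> _; apply: ideal2G.
by move=> [m2 s2]; apply: idealMul_ideal2 => //; apply: IH.
Qed.

Lemma prodI_sub s : allP (ideal2 G) s -> incl (prodI G s) G.
Proof. by move/prodI_ideal2 => [[]]. Qed.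

Lemma prodI_catr s t : allP (ideal2 G) (s ++ t) -> incl (prodI G (s ++ t)) (prodI G t).
Proof.
elim: s => [|m s IH] /=; first by move=> _ x.
move=> [[ml _] st] x /(idealMul_subr (proj1 (prodI_ideal2 st))).
by case: ml => mG _ _; move/(_ mG); apply: IH.
Qed.

Lemma prodI_catl s t : allP (ideal2 G) t -> incl (prodI G (s ++ t)) (prodI G s).
Proof.
move=> t2; elim: s => [|m s IH] /=; first exact: prodI_sub.
by move=> x; apply: idealMulS.
Qed.

Lemma prodI_sub_factor s m t : allP (ideal2 G) (s ++ m :: t) -> incl (prodI G (s ++ m :: t)) m.
Proof.
move=> smt x /(prodI_catr smt) /=.
have [_ /= [[_ mr] t2]] := iffLR (allP_cat _ _ _) smt.
exact/(idealMul_subl mr)/prodI_sub.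
Qed.

End Subalgebra.

Section BlockClasses.
Variables (k : fieldType) (A : algType k) (G : A -> Prop)
  (rel : (A -> Prop) -> (A -> Prop) -> Prop).
Hypothesis HG : is_subalg G.
Hypothesis HE : equiv_on_cfs G rel.
Implicit Types (I J m r : A -> Prop).

Lemma rel_refl r : cfs G r -> rel r r.
Proof. by case: HE => Hrefl _ _; apply: Hrefl. Qed.

Lemma rel_sym r r' : cfs G r -> cfs G r' -> rel r r' -> rel r' r.
Proof. by case: HE => _ Hsym _; apply: Hsym. Qed.

Lemma rel_trans r r' r'' : cfs G r -> cfs G r' -> cfs G r'' ->
  rel r r' -> rel r' r'' -> rel r r''.
Proof. by case: HE => _ _ Htrans; apply: Htrans. Qed.

Lemma cls_rel r r' : cfs G r -> cfs G r' -> rel r r' -> cls G rel r = cls G rel r'.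
Proof.
move=> r1 r'1 rr'; rewrite predeqE => m; split=> -[m1 mr]; split=> //.
  exact: rel_trans rr'.
exact: rel_trans mr (rel_sym r1 r'1 rr').
Qed.

Lemma part_rel (M : zmodType) (act : A -> M -> M) (N : M -> Prop) r r' v :
  cfs G r -> cfs G r' -> rel r r' -> part act N G rel r v -> part act N G rel r' v.
Proof. by move=> r1 r'1 rr'; rewrite /part (cls_rel r1 r'1 rr'). Qed.

Lemma WsetE r I : Wset G (cls G rel r) I -> exists s, allP (cls G rel r) s /\ I = prodI G s.
Proof. by move=> [s [sB sI]]; exists s; split=> //; rewrite predeqE. Qed.

Lemma cls_ideal2 r s : allP (cls G rel r) s -> allP (ideal2 G) s.
Proof. by apply: allP_mono => m [[]]. Qed.

Lemma Wset_ideal2 r I : Wset G (cls G rel r) I -> ideal2 G I.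
Proof. by move/WsetE=> [s [sB ->]]; apply/prodI_ideal2/cls_ideal2/sB. Qed.

Lemma WsetG (Bc : (A -> Prop) -> Prop) : Wset G Bc G.
Proof. by exists [::]. Qed.

Lemma Wset_directed r I1 I2 : Wset G (cls G rel r) I1 -> Wset G (cls G rel r) I2 ->
  exists I, [/\ Wset G (cls G rel r) I, incl I I1 & incl I I2].
Proof.
move=> /WsetE [s [sB ->]] /WsetE [t [tB ->]].
have stB : allP (cls G rel r) (s ++ t) by apply/allP_cat.
exists (prodI G (s ++ t)); split.
- by exists (s ++ t).
- exact/prodI_catl/cls_ideal2/tB.
- exact/prodI_catr/cls_ideal2/stB.
Qed.

Section BlockPart.
Variable V : lmodType A.
Notation partV := (part (@modact _ _ V) (@is0 _ _ V) G rel).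

Lemma partV0 r : partV r 0.
Proof. by exists G; split=> [|x _]; [apply: WsetG|rewrite /is0 /modact scaler0]. Qed.

Lemma partVD r v w : partV r v -> partV r w -> partV r (v + w).
Proof.
move=> [I1 [I1B I1v]] [I2 [I2B I2w]].
have [I [IB II1 II2]] := Wset_directed I1B I2B.
exists I; split=> // x Ix; rewrite /is0 /modact scalerDr.
by rewrite [x *: v]I1v ?[x *: w]I2w ?addr0 //; [apply: II2|apply: II1].
Qed.

Lemma partVZ r g v : G g -> partV r v -> partV r (g *: v).
Proof.
move=> Gg [I [IB Iv]]; exists I; split=> // x Ix.
by rewrite /is0 /modact scalerA; apply: Iv; case: (Wset_ideal2 IB) => _ [_ _]; apply.
Qed.

Lemma partVN r v : partV r v -> partV r (- v).
Proof. by move=> rv; rewrite -scaleN1r; apply: (partVZ _ rv); apply/(subalgN HG)/(subalg1 HG). Qed.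

End BlockPart.
End BlockClasses.

Section BlockProjection.
Variables (k : fieldType) (A : algType k) (G : A -> Prop)
  (rel : (A -> Prop) -> (A -> Prop) -> Prop).
Hypothesis HG : is_subalg G.
Hypothesis HE : equiv_on_cfs G rel.
Variable V : lmodType A.
Hypothesis HV : HC_block_mod G rel V.
Notation partV := (part (@modact _ _ V) (@is0 _ _ V) G rel).

Definition graded (p : (A -> Prop) * V) : bool := `[< cfs G p.1 /\ partV p.1 p.2 >].
Definition unrelated (r r' : A -> Prop) : bool := ~~ `[< rel r r' >].
Definition class_invariant (Q : pred (A -> Prop)) :=
  forall r r', cfs G r -> cfs G r' -> rel r r' -> Q r = Q r'.

Lemma unrelated_sum_eq0 L : all graded L -> pairwise unrelated (map fst L) ->
  \sum_(p <- L) p.2 = 0 -> forall Q : pred (A -> Prop), \sum_(p <- L | Q p.1) p.2 = 0.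
Proof.
move=> /all_nthP gL /(pairwiseP G) uL L0 Q.
pose d : (A -> Prop) * V := (G, 0).
have gLi (i : 'I_(size L)) : cfs G (nth d L i).1 /\ partV (nth d L i).1 (nth d L i).2.
  exact/asboolP/gL.
have uLij (i j : 'I_(size L)) : (i < j)%N -> ~ rel (nth d L i).1 (nth d L j).1.
  move=> ij; apply/asboolPn; rewrite -!(nth_map d G fst) //.
  by apply: (uL i j) => //; rewrite inE size_map.
have [_ block_uniq] := HV.
have Li0 : forall i : 'I_(size L), (nth d L i).2 = 0.
  apply: (block_uniq _ (fun i => (nth d L i).1) (fun i => (nth d L i).2)) => [i|i j ij|i|].
  - by case: (gLi i).
  - case: (ltngtP i j) => [/uLij //|ji rij|/val_inj eij]; last by rewrite eij eqxx in ij.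
    by apply: (uLij _ _ ji); apply: (rel_sym HE _ _ rij); [case: (gLi i)|case: (gLi j)].
  - by case: (gLi i).
  - by rewrite /is0 -[RHS]L0 (big_nth d) big_mkord.
by rewrite (big_nth d) big_mkord big1 // => i _; apply: Li0.
Qed.

(* The uniqueness clause of [is_block] only concerns summands from pairwise unrelated
   classes; merging the summands of each class reduces the general case to it. *)
Lemma merge_related_summands L : all graded L -> exists M,
  [/\ all graded M, pairwise unrelated (map fst M) &
      forall Q, class_invariant Q -> \sum_(p <- M | Q p.1) p.2 = \sum_(p <- L | Q p.1) p.2].
Proof.
elim: L => [|x L IH]; first by exists [::].
rewrite /= => /andP[gx /IH[M [gM uM MQ]]].
have /asboolP[x1 x2] := gx.
case: (boolP (has (fun p => `[< rel x.1 p.1 >]) M)) => [xM|/negbTE xM]; last first.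
  exists (x :: M); split=> [|/=|Q Qinv]; first by rewrite /= gx gM.
    by rewrite uM andbT all_map all_predC xM.
  by rewrite !big_cons MQ.
case/split_find: xM gM uM MQ => y M1 M2 /asboolP xy _.
rewrite all_cat all_rcons => /andP[/andP[gy gM1] gM2] uM MQ.
have /asboolP[y1 y2] := gy.
exists (rcons M1 (y.1, y.2 + x.2) ++ M2); split.
- rewrite all_cat all_rcons gM1 gM2 !andbT; apply/asboolP; split=> //=.
  exact/(partVD HG)/(part_rel HE x1 y1 xy).
- by rewrite map_cat map_rcons; rewrite map_cat map_rcons in uM.
- move=> Q Qinv; rewrite big_cons -MQ // !cat_rcons !big_cat !big_cons /=.
  rewrite (Qinv _ _ x1 y1 xy); case: (Q y.1) => //.
  by rewrite [y.2 + x.2]addrC -addrA addrCA.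
Qed.

Lemma graded_sum_eq0 L : all graded L -> \sum_(p <- L) p.2 = 0 ->
  forall Q, class_invariant Q -> \sum_(p <- L | Q p.1) p.2 = 0.
Proof.
move=> gL L0 Q Qinv; have [M [gM uM MQ]] := merge_related_summands gL.
rewrite -MQ //; apply: unrelated_sum_eq0 => //.
exact: etrans (MQ xpredT (fun _ _ _ _ _ => erefl)) L0.
Qed.

Lemma graded_decomposition v : exists L, all graded L /\ \sum_(p <- L) p.2 = v.
Proof.
have [/(_ v) [n [r [w [r1 _ rw vw]]]] _] := HV.
exists [seq (r i, w i) | i <- index_enum 'I_n]; split.
  by rewrite all_map; apply/seq.allP => i _; apply/asboolP; split; [apply: r1|apply: rw].
by rewrite big_map; apply/eqP; rewrite eq_sym -subr_eq0; apply/eqP.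
Qed.

Variable r0 : A -> Prop.
Hypothesis Hr0 : cfs G r0.

(* Computed from an arbitrary decomposition of [v]; by [proj_blockE] it does not depend
   on the choice. *)
Definition proj_block (v : V) : V :=
  \sum_(p <- sval (cid (graded_decomposition v)) | `[< rel p.1 r0 >]) p.2.

Lemma rel_class_invariant : class_invariant (fun r => `[< rel r r0 >]).
Proof.
move=> r r' r1 r'1 rr'; apply: asbool_equiv_eq; split=> [rr0|r'r0].
  exact: (rel_trans HE r'1 r1 Hr0 (rel_sym HE r1 r'1 rr') rr0).
exact: (rel_trans HE r1 r'1 Hr0 rr' r'r0).
Qed.

Lemma proj_blockE L v : all graded L -> \sum_(p <- L) p.2 = v ->
  proj_block v = \sum_(p <- L | `[< rel p.1 r0 >]) p.2.
Proof.
move=> gL Lv; rewrite /proj_block; case: cid => D [gD Dv] /=.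
have gDL : all graded (D ++ [seq (p.1, - p.2) | p <- L]).
  rewrite all_cat gD all_map /=; apply: sub_all gL => p /asboolP[p1 p2].
  exact/asboolP/(conj p1 (partVN HG p2)).
have := graded_sum_eq0 gDL _ rel_class_invariant.
rewrite !big_cat !big_map /= !sumrN Dv Lv subrr => /(_ erefl) /eqP.
by rewrite subr_eq0 => /eqP.
Qed.

Lemma proj_blockD v w : proj_block (v + w) = proj_block v + proj_block w.
Proof.
have [L [gL Lv]] := graded_decomposition v; have [M [gM Mw]] := graded_decomposition w.
rewrite (proj_blockE gL Lv) (proj_blockE gM Mw) (@proj_blockE (L ++ M)) ?big_cat ?Lv ?Mw //.
by rewrite all_cat gL.
Qed.

Lemma proj_blockZ g v : G g -> proj_block (g *: v) = g *: proj_block v.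
Proof.
move=> Gg; have [L [gL Lv]] := graded_decomposition v.
rewrite (proj_blockE gL Lv) (@proj_blockE [seq (p.1, g *: p.2) | p <- L]).
- by rewrite big_map scaler_sumr.
- rewrite all_map; apply: sub_all gL => p /asboolP[p1 p2].
  exact/asboolP/(conj p1 (partVZ HG Gg p2)).
- by rewrite big_map -scaler_sumr Lv.
Qed.

Lemma proj_block_id v : partV r0 v -> proj_block v = v.
Proof.
move=> r0v; rewrite (@proj_blockE [:: (r0, v)]) ?big_cons ?big_nil /= ?andbT ?addr0.
- by rewrite asboolT //; apply: (rel_refl HE Hr0).
- exact/asboolP.
- by [].
Qed.

Lemma proj_block_eq0 r v : cfs G r -> ~ rel r r0 -> partV r v -> proj_block v = 0.
Proof.
move=> r1 nrr0 rv; rewrite (@proj_blockE [:: (r, v)]) ?big_cons ?big_nil /= ?andbT ?addr0.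
- by rewrite asboolF.
- exact/asboolP.
- by [].
Qed.

Lemma proj_block0 : proj_block 0 = 0.
Proof. exact/proj_block_id/partV0. Qed.

Lemma proj_block_sum (I : Type) (s : seq I) (F : I -> V) :
  proj_block (\sum_(i <- s) F i) = \sum_(i <- s) proj_block (F i).
Proof.
elim: s => [|i s IH]; first by rewrite !big_nil proj_block0.
by rewrite !big_cons proj_blockD IH.
Qed.

Lemma proj_block_part v : partV r0 (proj_block v).
Proof.
rewrite /proj_block; case: cid => L [gL _] /=; elim: L gL => [|p L IH] /=.
  by rewrite big_nil; move=> _; apply: partV0.
case/andP=> /asboolP[p1 p2] /IH pL; rewrite big_cons.
case: asboolP => // pr0; apply: (partVD HG) pL.
exact: (part_rel HE p1 Hr0 pr0 p2).
Qed.

End BlockProjection.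

Section Noetherian.
Variables (k : fieldType) (A : algType k) (G : A -> Prop).
Hypothesis HG : is_subalg G.
Implicit Types (I X m : A -> Prop).

Definition rideal_gen (s : seq A) : A -> Prop := fun z =>
  exists g : 'I_(size s) -> A, (forall i, G (g i)) /\ z = \sum_(i < size s) s`_i * g i.

Lemma rideal_gen_right_ideal s : (forall x, x \in s -> G x) -> right_ideal G (rideal_gen s).
Proof.
move=> sG; split; last first.
  move=> h _ Gh [g [Gg ->]]; exists (fun i => g i * h); split=> [i|]; first exact: (subalgM HG).
  by rewrite mulr_suml; apply: eq_bigr => i _; rewrite mulrA.
- split=> [|_ _ [g [Gg ->]] [g' [Gg' ->]]|_ [g [Gg ->]]].
  + exists (fun=> 0); split=> [i|]; first exact: (subalg0 HG).
    by rewrite big1 // => i _; rewrite mulr0.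
  + exists (fun i => g i + g' i); split=> [i|]; first exact: (subalgD HG).
    by rewrite -big_split; apply: eq_bigr => i _; rewrite mulrDr.
  + exists (fun i => - g i); split=> [i|]; first exact: (subalgN HG).
    by rewrite -sumrN; apply: eq_bigr => i _; rewrite mulrN.
- move=> _ [g [Gg ->]]; apply: (subalg_sum HG) => i.
  exact/(subalgM HG)/Gg/sG/mem_nth.
Qed.

Lemma rideal_gen_cons a s : incl (rideal_gen s) (rideal_gen (a :: s)).
Proof.
move=> _ [g [Gg ->]]; exists (fun i => if unlift ord0 i is Some j then g j else 0); split.
  by move=> i; case: unlift => [j|]; [apply: Gg|apply: (subalg0 HG)].
by rewrite big_ord_recl unlift_none mulr0 add0r; apply: eq_bigr => i _; rewrite liftK.
Qed.

Lemma rideal_gen_head a s : rideal_gen (a :: s) a.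
Proof.
exists (fun i => if unlift ord0 i is Some j then 0 else 1); split.
  by move=> i; case: unlift => [j|]; [apply: (subalg0 HG)|apply: (subalg1 HG)].
by rewrite big_ord_recl unlift_none mulr1 big1 ?addr0 // => i _; rewrite liftK mulr0.
Qed.

Lemma right_ideal_fg I : noetherian G -> right_ideal G I ->
  exists s, (forall x, x \in s -> I x) /\ incl I (rideal_gen s).
Proof.
move=> [_ acc] rI; apply: contrapT => not_fg.
have next s : exists z, (forall x, x \in s -> I x) -> I z /\ ~ rideal_gen s z.
  have [sI|] := pselect (forall x, x \in s -> I x); last by exists 0.
  have /existsNP[z /not_implyP zI] : ~ incl I (rideal_gen s) by move=> Is; apply: not_fg; exists s.
  by exists z.
have [f fP] := choice next.
pose fix chain n := if n is n'.+1 then f (chain n') :: chain n' else [::].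
have chainI n x : x \in chain n -> I x.
  elim: n x => [|n IH] x //=; rewrite inE => /orP[/eqP ->|/IH //].
  exact: (fP _ IH).1.
have chain_ideal n : right_ideal G (rideal_gen (chain n)).
  by apply: rideal_gen_right_ideal => x /chainI; case: rI => IG _ _; apply: IG.
have [n0 chain_n0] := acc _ chain_ideal (fun n => @rideal_gen_cons _ _).
apply: (fP _ (chainI n0)).2; apply: (chain_n0 n0.+1); exact: rideal_gen_head.
Qed.

Lemma fin_codimT I (T : finType) (e : T -> A) : (forall t, G (e t)) ->
  (forall x, G x -> exists c : T -> k, I (x - \sum_t c t *: e t)) -> fin_codim G I.
Proof.
move=> Ge spanI; exists #|T|, (fun i => e (enum_val i)); split=> // x /spanI[c cI].
exists (fun i => c (enum_val i)).
by rewrite -(big_enum_val (A := T) (fun t => c t *: e t)).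
Qed.

Lemma fin_codim_idealMul m X s : ideal2 G m -> ideal2 G X ->
  (forall x, x \in s -> m x) -> incl m (rideal_gen s) ->
  fin_codim G m -> fin_codim G X -> fin_codim G (idealMul m X).
Proof.
move=> m2 X2 sm m_gen [n1 [e1 [Ge1 span1]]] [n2 [e2 [Ge2 span2]]].
have mG : incl m G by case: m2 => [[]].
pose e (t : 'I_n1 + 'I_(size s) * 'I_n2) :=
  match t with inl i => e1 i | inr t => s`_t.1 * e2 t.2 end.
apply: (fin_codimT (e := e)) => [[i|t] /=|x Gx]; first exact: Ge1.
  exact/(subalgM HG)/Ge2/mG/sm/mem_nth.
have [c1 xc1] := span1 x Gx; have [g [Gg xg]] := m_gen _ xc1.
have /fin_all_exists[c2 gc2] (p : 'I_(size s)) :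
  exists c2 : 'I_n2 -> k, X (g p - \sum_j c2 j *: e2 j) by apply: span2.
exists (fun t => match t with inl i => c1 i | inr t => c2 t.1 t.2 end).
rewrite big_sumType /=.
have -> : \sum_(t : 'I_(size s) * 'I_n2) c2 t.1 t.2 *: (s`_t.1 * e2 t.2) =
          \sum_(p < size s) s`_p * \sum_(j < n2) c2 p j *: e2 j.
  rewrite -(pair_bigA _ (fun (p : 'I_(size s)) (j : 'I_n2) => c2 p j *: (s`_p * e2 j))).
  apply: eq_bigr => p _; rewrite mulr_sumr.
  by apply: eq_bigr => j _; rewrite scalerAr.
rewrite opprD addrA xg -sumrB.
have [[_ addmX _] _] := idealMul_ideal2 m2 X2.
apply: (addsub_sums addmX (P := idealMul m X)) => //.
apply: sums_big => p; apply: sums1; rewrite -mulrBr.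
exact: idealMul_mem (sm _ (mem_nth 0 (ltn_ord p))) (gc2 p).
Qed.

Lemma fin_codim_prodI s : noetherian G -> allP (cfs G) s -> fin_codim G (prodI G s).
Proof.
move=> HN; elim: s => [|m s IH] /=.
  move=> _; exists 0%N, (fun=> 0); split=> [[]//|x Gx].
  by exists (fun=> 0); rewrite big_ord0 subr0.
move=> [[m2 _ _ m_fin] s1]; have [gens [gm m_gen]] := right_ideal_fg HN (proj2 m2).
apply: fin_codim_idealMul gm m_gen m_fin (IH s1) => //.
by apply: (prodI_ideal2 HG); apply: (allP_mono _ s1) => m' [].
Qed.

End Noetherian.

Section CompletionSpan.
Variables (k : fieldType) (A : algType k) (G : A -> Prop) (Bc : (A -> Prop) -> Prop).

Lemma ABB_fg_left_span I J : Wset G Bc I -> Wset G Bc J -> fin_codim G I ->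
  ABB_fg_left G Bc -> exists nq (q : 'I_nq -> A), forall a,
    exists (mu : 'I_nq -> k) x y,
      [/\ rightGen I x, leftGen J y & a = \sum_(i < nq) mu i *: q i + x + y].
Proof.
move=> WI WJ [ne [e [Ge span_e]]] [r [E [_ fgE]]].
pose q (t : 'I_r * 'I_ne) := e t.2 * E t.1 I J.
exists #|{: 'I_r * 'I_ne}|, (fun i => q (enum_val i)) => a.
(* [a] is the image of the constant family in A(B,B), hence a combination of the [E i]. *)
have const_a : ABB_el G Bc (fun _ _ => a).
  move=> n m n' m' _ _ _ _ _ _; rewrite subrr; exists 0, 0; rewrite addr0.
  by split; [apply/rightGenE/sums0|split; [apply/leftGenE/sums0|]].
have [c [hatc a_eq]] := fgE _ const_a.
have [u [w [Iu [Jw a_uw]]]] := a_eq I J WI WJ.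
have /fin_all_exists[mu cmu] (i : 'I_r) :
  exists mu : 'I_ne -> k, I (c i I - \sum_j mu j *: e j).
  by apply: span_e; case: (hatc i) => Gc _; apply: Gc.
exists (fun t => mu (enum_val t).1 (enum_val t).2).
exists (\sum_i (c i I - \sum_j mu i j *: e j) * E i I J + u), w; split=> //.
  apply/rightGenE/sumsD; last exact/rightGenE.
  by apply: sums_big => i; apply: sums1; exists (E i I J), (c i I - \sum_j mu i j *: e j).
have term_i (i : 'I_r) : \sum_j mu i j *: q (i, j) + (c i I - \sum_j mu i j *: e j) * E i I J
    = c i I * E i I J.
  rewrite mulrBl mulr_suml addrCA.
  under [X in _ - X]eq_bigr => j _ do rewrite -scalerAl.
  by rewrite subrr addr0.
rewrite -(big_enum_val (A := {: 'I_r * 'I_ne}) (fun t => mu t.1 t.2 *: q t)) /=.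
have -> : \sum_(t in {: 'I_r * 'I_ne}) mu t.1 t.2 *: q t = \sum_i \sum_j mu i j *: q (i, j).
  by rewrite pair_bigA; apply: eq_bigr => -[i j] _.
rewrite addrA -big_split /=; under eq_bigr => i _ do rewrite term_i.
by rewrite -addrA -a_uw addrC subrK.
Qed.

End CompletionSpan.

Section SimpleModules.
Variables (k : fieldType) (A : algType k).

Lemma simple_cyclic (V : lmodType A) (u : V) : simple_mod V -> u != 0 ->
  forall v : V, exists a : A, v = a *: u.
Proof.
move=> [_ simpleV] u0 v.
have Au : submod (fun w : V => exists a : A, w = a *: u).
  split=> [|_ _ [a ->] [b ->]|b _ [a ->]]; first by exists 0; rewrite scale0r.
    by exists (a + b); rewrite scalerDl.
  by exists (b * a); rewrite scalerA.
case: (simpleV _ Au) => [Au0|]; last exact.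
by move: u0; rewrite (Au0 u) ?eqxx //; exists 1; rewrite scale1r.
Qed.

Lemma scale_alg_eq0 (V : lmodType A) (c : k) (v : V) : c != 0 -> c%:A *: v = 0 -> v = 0.
Proof.
move=> c0 /(congr1 (fun w => c^-1%:A *: w)).
by rewrite scalerA -scalerAl mul1r scalerA mulVf // !scale1r scaler0.
Qed.

Lemma mod_iso_sym (V W : lmodType A) : mod_iso V W -> mod_iso W V.
Proof.
move=> [f [fD fZ [g fK gK]]]; exists g; split; last by exists f.
- by move=> u v; apply: (can_inj fK); rewrite fD !gK.
- by move=> a v; apply: (can_inj fK); rewrite fZ !gK.
Qed.

Lemma schur_iso (V W : lmodType A) (f : V -> W) : simple_mod V -> simple_mod W ->
  {morph f : u v / u + v} -> (forall (a : A) v, f (a *: v) = a *: f v) ->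
  (exists v, f v != 0) -> mod_iso V W.
Proof.
move=> [_ simpleV] [_ simpleW] fD fZ [v0 fv0].
have f0 : f 0 = 0 by rewrite -(scale0r (0 : V)) fZ scale0r.
have f_inj : injective f.
  have kerf : submod (fun v : V => f v = 0).
    split=> // [x y fx fy|a x fx]; first by rewrite fD fx fy addr0.
    by rewrite fZ fx scaler0.
  case: (simpleV _ kerf) => [ker0 x y fxy|kerT]; last by rewrite kerT eqxx in fv0.
  apply/eqP; rewrite -subr_eq0; apply/eqP/ker0.
  by rewrite fD -scaleN1r fZ scaleN1r fxy subrr.
have f_surj : forall w, exists v, f v = w.
  have imf : submod (fun w : W => exists v, w = f v).
    split=> [|_ _ [x ->] [y ->]|a _ [x ->]]; first by exists 0.
      by exists (x + y); rewrite fD.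
    by exists (a *: x); rewrite fZ.
  case: (simpleW _ imf) => [im0|imT w]; last by have [v ->] := imT w; exists v.
  by rewrite -(im0 (f v0)) ?eqxx in fv0; exists v0.
have [g gK] := choice f_surj.
exists f; split=> //; exists g => // v; exact: f_inj.
Qed.

Lemma iso_of_annihilator_sub (V W : lmodType A) (u : V) (w : W) :
  simple_mod V -> simple_mod W -> u != 0 -> w != 0 ->
  (forall a : A, a *: u = 0 -> a *: w = 0) -> mod_iso V W.
Proof.
move=> simpleV simpleW u0 w0 ann_uw.
have [coef coefP] := choice (simple_cyclic simpleV u0).
(* [a *: u |-> a *: w] is well defined because the annihilator of [u] kills [w]. *)
have wd a b : a *: u = b *: u -> a *: w = b *: w.
  by move=> /eqP; rewrite -subr_eq0 -scalerBl => /eqP/ann_uw/eqP; rewrite scalerBl subr_eq0 => /eqP.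
apply: (@schur_iso _ _ (fun v => coef v *: w)) => // [x y|a x|].
- by rewrite -scalerDl; apply: wd; rewrite scalerDl -!coefP.
- by rewrite scalerA; apply: wd; rewrite -scalerA -!coefP.
- by exists u; rewrite (wd _ 1) ?scale1r // -coefP.
Qed.

Section Density.
Variables (t : nat) (Vs : 'I_t -> lmodType A) (us : forall j, Vs j).
Hypothesis simpleVs : forall j, simple_mod (Vs j).
Hypothesis us_neq0 : forall j, us j != 0.
Hypothesis Vs_noniso : forall i j, i != j -> ~ mod_iso (Vs i) (Vs j).

Lemma density_subset n (S : {set 'I_t}) l : (#|S| <= n)%N -> l \in S ->
  exists a : A, a *: us l = us l /\ forall j, j \in S -> j != l -> a *: us j = 0.
Proof.
elim: n S l => [|n IH] S l; first by rewrite leqn0 => /eqP/cards0_eq ->; rewrite inE.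
move=> cardS lS; pose S' := S :\ l.
have cardS' : (#|S'| <= n)%N by move: cardS; rewrite (cardsD1 l S) lS add1n ltnS.
have /fin_all_exists[a aP] (j : 'I_t) : exists a : A, j \in S' ->
    a *: us j = us j /\ forall i, i \in S' -> i != j -> a *: us i = 0.
  have [jS'|] := boolP (j \in S'); last by exists 0.
  by have [a ?] := IH S' j cardS' jS'; exists a.
pose K b := forall j, j \in S' -> b *: us j = 0.
have Kl : submod (fun v : Vs l => exists b, K b /\ v = b *: us l).
  split=> [|_ _ [b [Kb ->]] [c [Kc ->]]|c _ [b [Kb ->]]].
  - by exists 0; split=> [j _|]; rewrite scale0r.
  - by exists (b + c); split=> [j jS|]; rewrite scalerDl // Kb // Kc // addr0.
  - by exists (c * b); split=> [j jS|]; rewrite -scalerA // Kb // scaler0.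
have [_ simple_l] := simpleVs l.
case: (simple_l _ Kl) => [Kl0|KlT]; last first.
  have [b [Kb bl]] := KlT (us l); exists b; split=> [|j jS jl]; first by rewrite -bl.
  by apply: Kb; rewrite !inE jl.
have K0 b : K b -> b *: us l = 0 by move=> Kb; apply: Kl0; exists b.
have al0 j : j \in S' -> a j *: us l = 0.
  move=> jS'; apply: contrapT => /eqP ajl; have jl : j != l by move: jS'; rewrite !inE => /andP[].
  apply: (Vs_noniso jl); apply: (iso_of_annihilator_sub (simpleVs j) (simpleVs l) (us_neq0 j) ajl).
  move=> c cj; rewrite scalerA; apply: K0 => i iS'; rewrite -scalerA.
  have [-> | ij] := eqVneq i j; first by rewrite (aP j jS').1.
  by rewrite (aP j jS').2 ?scaler0.
have : K (1 - \sum_(j in S') a j).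
  move=> i iS'; rewrite scalerBl scale1r scaler_suml (bigD1 i) //= (aP i iS').1.
  rewrite big1 ?addr0 ?subrr // => j /andP[jS' ji].
  by rewrite (aP j jS').2 // eq_sym.
move/K0/eqP; rewrite scalerBl scale1r scaler_suml big1 ?subr0 ?(negbTE (us_neq0 l)) //.
Qed.

Lemma density l : exists a : A, a *: us l = us l /\ forall j, j != l -> a *: us j = 0.
Proof.
have [a [al aj]] := @density_subset #|[set: 'I_t]| [set: 'I_t] l (leqnn _) (in_setT l).
by exists a; split=> // j; apply: aj; rewrite in_setT.
Qed.

End Density.
End SimpleModules.

Lemma linear_dependence (k : fieldType) (t n : nat) (mu : 'I_t -> 'I_n -> k) : (n < t)%N ->
  exists2 lam : 'I_t -> k, exists l, lam l != 0 & forall i, \sum_(l < t) lam l * mu l i = 0.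
Proof.
move=> n_lt_t; pose M : 'M[k]_(t, n) := \matrix_(l, i) mu l i.
have : kermx M != 0.
  by rewrite -mxrank_eq0 mxrank_ker subn_eq0 -ltnNge (leq_ltn_trans (rank_leq_col M)).
case/rowV0Pn => x /sub_kermxP xM x0; exists (fun l => x 0 l).
  apply/existsP; rewrite -negb_forall; apply: contra x0 => /forallP x0l.
  by apply/eqP/rowP => l; rewrite mxE; apply/eqP.
move=> i; transitivity ((x *m M) 0 i); last by rewrite xM mxE.
by rewrite mxE; apply: eq_bigr => l _; rewrite mxE.
Qed.

Lemma finite_iso_classes (k : fieldType) (A : algType k) (Pm : lmodType A -> Prop) (N : nat) :
  (forall t (Vs : 'I_t -> lmodType A), (forall j, Pm (Vs j)) ->
     (forall i j, i != j -> ~ mod_iso (Vs i) (Vs j)) -> (t <= N)%N) ->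
  exists n (Vs : 'I_n -> lmodType A), forall V, Pm V -> exists i, mod_iso V (Vs i).
Proof.
move=> bound; pose family t := exists Vs : 'I_t -> lmodType A,
  (forall j, Pm (Vs j)) /\ forall i j, i != j -> ~ mod_iso (Vs i) (Vs j).
have family0 : exists t, `[< family t >].
  by exists 0%N; apply/asboolP; exists (fun=> A^o); split=> -[].
have family_le t : `[< family t >] -> (t <= N)%N.
  by move=> /asboolP[Vs [VsP noniso]]; apply: bound noniso.
case: (ex_maxnP family0 family_le) => t /asboolP[Vs [VsP noniso]] t_max.
exists t, Vs => V PV; apply: contrapT => /forallNP V_new.
pose Vs' (j : 'I_t.+1) := if unlift ord_max j is Some j' then Vs j' else V.
suff /t_max : `[< family t.+1 >] by rewrite ltnn.
apply/asboolP; exists Vs'; split=> [j|i j]; first by rewrite /Vs'; case: unlift.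
rewrite /Vs'; case: (unliftP ord_max i) => [i'|] ->; case: (unliftP ord_max j) => [j'|] ->;
  rewrite ?liftK ?unlift_none => ij.
- by apply: noniso; apply: contraNneq ij => ->.
- by move/mod_iso_sym; apply: V_new.
- exact: V_new.
- by rewrite eqxx in ij.
Qed.

Section AnnihilatedModules.
Variables (k : fieldType) (A : algType k) (G : A -> Prop)
  (rel : (A -> Prop) -> (A -> Prop) -> Prop) (r0 : A -> Prop).
Hypothesis HG : is_subalg G.
Hypothesis HE : equiv_on_cfs G rel.
Hypothesis Hr0 : cfs G r0.
Variables (J I : A -> Prop).
Hypothesis WJ : Wset G (cls G rel r0) J.
Hypothesis IG : incl I G.
Notation actA := (fun x (a : A) => x * a).
Hypothesis AJ_block : is_block actA (leftGen J) G rel.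
Hypothesis I_kills : forall a, part actA (leftGen J) G rel r0 a -> kills actA (leftGen J) I a.

Section OneModule.
Variable V : lmodType A.
Hypothesis HV : HC_block_mod G rel V.
Hypothesis simpleV : simple_mod V.
Variable u : V.
Hypothesis u_neq0 : u != 0.
Hypothesis J_u : forall x, J x -> x *: u = 0.
Notation partV := (part (@modact _ _ V) (@is0 _ _ V) G rel).
Notation P := (proj_block HV r0).

Lemma annihilated_part : partV r0 u.
Proof. by exists J. Qed.

(* Write [v = a *: u] and decompose [a] in the block module [A/AJ]: the summands outside
   the block of [r0] are killed by the projection, those inside by [I]. *)
Lemma I_kills_partV v : partV r0 v -> forall x, I x -> x *: v = 0.
Proof.
move=> r0v x Ix; rewrite -(proj_block_id HG HE HV Hr0 r0v).
have [a ->] := simple_cyclic simpleV u_neq0 v.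
have [/(_ a) [n [r [w [r1 _ rw aw]]]] _] := AJ_block.
have au : a *: u = \sum_(i < n) w i *: u.
  by apply/eqP; rewrite -subr_eq0 -scaler_suml -scalerBl; apply/eqP/(leftGen_kills J_u).
have wu i : partV (r i) (w i *: u).
  have [K [WK Kw]] := rw i; exists K; split=> // y Ky.
  by rewrite /is0 /modact scalerA; apply: (leftGen_kills J_u); apply: Kw.
rewrite au (proj_block_sum HG HE HV Hr0) scaler_sumr big1 // => i _.
have [rr0|nrr0] := pselect (rel (r i) r0).
  rewrite (proj_block_id HG HE HV Hr0 (part_rel HE (r1 i) Hr0 rr0 (wu i))) scalerA.
  exact/(leftGen_kills J_u)/(I_kills (part_rel HE (r1 i) Hr0 rr0 (rw i))).
by rewrite (proj_block_eq0 HG HE HV Hr0 (r1 i) nrr0 (wu i)) scaler0.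
Qed.

Lemma proj_block_rightGen x v : rightGen I x -> P (x *: v) = 0.
Proof.
move=> [n [a [y [Iy ->]]]]; rewrite scaler_suml (proj_block_sum HG HE HV Hr0) big1 // => i _.
rewrite -scalerA (proj_blockZ HG HE HV Hr0 _ (IG (Iy i))).
exact: (I_kills_partV (proj_block_part HG HE HV Hr0 _) (Iy i)).
Qed.

Lemma proj_block_expand nq (q : 'I_nq -> A) (mu : 'I_nq -> k) x y :
  rightGen I x -> leftGen J y ->
  P ((\sum_(i < nq) mu i *: q i + x + y) *: u) = \sum_(i < nq) (mu i)%:A *: P (q i *: u).
Proof.
move=> Ix Jy; rewrite !scalerDl (leftGen_kills J_u Jy) addr0.
rewrite !(proj_blockD HG HE HV Hr0) (proj_block_rightGen u Ix) addr0.
rewrite scaler_suml (proj_block_sum HG HE HV Hr0); apply: eq_bigr => i _.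
by rewrite -[mu i *: q i]mulr_algl -scalerA (proj_blockZ HG HE HV Hr0 _ (subalg_scalar HG _)).
Qed.

End OneModule.

Variables (nq : nat) (q : 'I_nq -> A).
Hypothesis A_span : forall a, exists (mu : 'I_nq -> k) x y,
  [/\ rightGen I x, leftGen J y & a = \sum_(i < nq) mu i *: q i + x + y].

Lemma annihilated_part_findim (V : lmodType A) (HV : HC_block_mod G rel V) (u : V) :
  simple_mod V -> u != 0 -> (forall x, J x -> x *: u = 0) -> part_findim G rel r0 V.
Proof.
move=> simpleV u0 J_u; exists nq, (fun i => proj_block HV r0 (q i *: u)) => v r0v.
have [a av] := simple_cyclic simpleV u0 v.
have [mu [x [y [Ix Jy a_eq]]]] := A_span a.
exists mu; rewrite -(proj_block_id HG HE HV Hr0 r0v) av a_eq.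
exact: proj_block_expand.
Qed.

(* By density, [a_l] acts on [u_j] as the Kronecker delta; there are more [a_l] than the
   [nq] coordinates describing their action on the block of [r0], so some nontrivial
   combination of them acts by zero there, which contradicts the delta property. *)
Lemma card_noniso_annihilated_le t (Vs : 'I_t -> lmodType A) (us : forall j, Vs j) :
  (forall j, HC_block_mod G rel (Vs j)) -> (forall j, simple_mod (Vs j)) ->
  (forall j, us j != 0) -> (forall j x, J x -> x *: us j = 0) ->
  (forall i j, i != j -> ~ mod_iso (Vs i) (Vs j)) -> (t <= nq)%N.
Proof.
move=> HVs simpleVs us0 J_us noniso; rewrite leqNgt; apply/negP => nq_lt_t.
have /fin_all_exists[a aP] := density simpleVs us0 noniso.
have /fin_all_exists[mu muP] l := A_span (a l).
have [lam [l0 lam_l0] lam_mu] := linear_dependence mu nq_lt_t.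
pose P := proj_block (HVs l0) r0; pose u := us l0.
have Pa l : P (a l *: u) = \sum_i (mu l i)%:A *: P (q i *: u).
  have [x [y [Ix Jy ->]]] := muP l.
  exact: (proj_block_expand (HVs l0) (simpleVs l0) (us0 l0) (J_us l0) q (mu l) Ix Jy).
have : \sum_l (lam l)%:A *: P (a l *: u) = (lam l0)%:A *: u.
  rewrite (bigD1 l0) //= big1 ?addr0 => [|l ll0].
    by rewrite (aP l0).1 /P (proj_block_id HG HE (HVs l0) Hr0 (annihilated_part (J_us l0))).
  by rewrite (aP l).2 1?eq_sym // /P (proj_block0 HG HE _ Hr0) scaler0.
under eq_bigr => l _ do rewrite Pa scaler_sumr.
rewrite exchange_big big1 /= => [/esym/(scale_alg_eq0 lam_l0)/eqP|i _].
  by rewrite (negbTE (us0 l0)).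
under eq_bigr => l _ do rewrite scalerA mulr_algl scalerA.
by rewrite -scaler_suml -scaler_suml lam_mu !scale0r.
Qed.

Hypothesis supp_annihilated : forall V : lmodType A,
  in_supp (@modact _ _ V) (@is0 _ _ V) G rel r0 ->
  exists u : V, u != 0 /\ forall x, J x -> x *: u = 0.

Lemma supported_simple_iso_classes : exists (n : nat) (Vs : 'I_n -> lmodType A),
  forall V : lmodType A, simple_mod V -> HC_block_mod G rel V ->
    in_supp (@modact _ _ V) (@is0 _ _ V) G rel r0 -> exists i, mod_iso V (Vs i).
Proof.
pose good V := [/\ simple_mod V, HC_block_mod G rel V &
                   in_supp (@modact _ _ V) (@is0 _ _ V) G rel r0].
have good_bounded t (Vs : 'I_t -> lmodType A) : (forall j, good (Vs j)) ->
    (forall i j, i != j -> ~ mod_iso (Vs i) (Vs j)) -> (t <= nq)%N.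
  move=> goodVs noniso.
  have /fin_all_exists[us usP] j : exists u : Vs j, u != 0 /\ forall x, J x -> x *: u = 0.
    by case: (goodVs j) => _ _; apply: supp_annihilated.
  apply: (card_noniso_annihilated_le (us := us)) noniso.
  - by move=> j; case: (goodVs j).
  - by move=> j; case: (goodVs j).
  - by move=> j; case: (usP j).
  - by move=> j; case: (usP j).
have [n [Vs Vs_cover]] := finite_iso_classes good_bounded.
by exists n, Vs => V *; apply: Vs_cover.
Qed.

Lemma simple_part_findim (V : lmodType A) :
  simple_mod V -> HC_block_mod G rel V -> part_findim G rel r0 V.
Proof.
move=> simpleV HV.
have [/supp_annihilated[u [u0 J_u]]|not_suppV] :=
  pselect (in_supp (@modact _ _ V) (@is0 _ _ V) G rel r0).
  exact: (annihilated_part_findim HV simpleV u0 J_u).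
exists 0%N, (fun=> 0) => v r0v; exists (fun=> 0); rewrite big_ord0.
by apply: contrapT => v0; apply: not_suppV; exists v.
Qed.

End AnnihilatedModules.

Section SupportedModules.
Variables (k : fieldType) (A : algType k) (G : A -> Prop)
  (rel : (A -> Prop) -> (A -> Prop) -> Prop) (r0 : A -> Prop).
Hypothesis HG : is_subalg G.

Lemma part_annihilated_vector (V : lmodType A) (v : V) :
  part (@modact _ _ V) (@is0 _ _ V) G rel r0 v -> v != 0 ->
  exists m, cls G rel r0 m /\ exists u : V, u != 0 /\ forall x, m x -> x *: u = 0.
Proof.
move=> [_ [/WsetE[s [sB ->]] s_v]]; elim: s v sB s_v => [|m s IH] v /=.
  by move=> _ /(_ 1 (subalg1 HG)); rewrite /is0 /modact scale1r => ->; rewrite eqxx.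
move=> [mB sB] ms_v v0; have [s_v|] := pselect (forall y, prodI G s y -> y *: v = 0).
  exact: IH s_v v0.
move=> /existsNP[y /not_implyP[sy /eqP yv0]].
exists m; split=> //; exists (y *: v); split=> // x mx.
by rewrite scalerA; apply: ms_v; apply: idealMul_mem.
Qed.

Lemma finite_class_product : finite_class G rel r0 ->
  exists J, Wset G (cls G rel r0) J /\ forall m, cls G rel r0 m -> incl J m.
Proof.
move=> [n [ms msP]]; pose inB i := `[< cls G rel r0 (ms i) >].
have sB e : allP (cls G rel r0) [seq ms i | i <- e & inB i].
  by elim: e => //= i e IH; rewrite /inB; case: asboolP.
exists (prodI G [seq ms i | i <- enum 'I_n & inB i]); split.
  by exists [seq ms i | i <- enum 'I_n & inB i].
move=> m mB; have [i mi] := msP m mB; have {}mi : m = ms i by rewrite predeqE.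
rewrite mi in mB *.
have iB : i \in [seq i <- enum 'I_n | inB i] by rewrite mem_filter mem_enum andbT; apply/asboolP.
move: (sB (enum 'I_n)); case/splitPr: iB => e1 e2; rewrite map_cat => e12B.
exact: (prodI_sub_factor HG (cls_ideal2 e12B)).
Qed.

Lemma in_supp_annihilated J : (forall m, cls G rel r0 m -> incl J m) ->
  forall V : lmodType A, in_supp (@modact _ _ V) (@is0 _ _ V) G rel r0 ->
  exists u : V, u != 0 /\ forall x, J x -> x *: u = 0.
Proof.
move=> J_sub V [v [r0v /eqP v0]].
have [m [mB [u [u0 m_u]]]] := part_annihilated_vector r0v v0.
by exists u; split=> // x /(J_sub m mB); apply: m_u.
Qed.

End SupportedModules.

Theorem mainTheorem3 (k : fieldType) (A : algType k) (G : A -> Prop)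
  (rel : (A -> Prop) -> (A -> Prop) -> Prop) (r0 : A -> Prop) :
  is_subalg G -> equiv_on_cfs G rel -> strong_HC_block_subalg G rel ->
  cfs G r0 -> finite_class G rel r0 -> noetherian G ->
  ABB_fg_left G (cls G rel r0) -> ABB_fg_right G (cls G rel r0) ->
  (exists (n : nat) (Vs : 'I_n -> lmodType A),
     forall V : lmodType A, simple_mod V -> HC_block_mod G rel V ->
       in_supp (@modact _ _ V) (@is0 _ _ V) G rel r0 ->
       exists i, mod_iso V (Vs i)) /\
  (forall V : lmodType A, simple_mod V -> HC_block_mod G rel V ->
     part_findim G rel r0 V).
Proof.
move=> HG HE HS Hr0 HB HN HL _.
have [J [WJ J_sub]] := finite_class_product HG HB.
have [[AJ_block AJ_strong] _] := HS r0 Hr0 J WJ.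
have [I [WI I_kills]] := AJ_strong r0 Hr0.
have IG : incl I G by case: (Wset_ideal2 HG WI) => [[]].
have I_fin : fin_codim G I.
  have [s [sB ->]] := WsetE WI; apply: (fin_codim_prodI HG HN).
  by apply: (allP_mono _ sB) => m [].
have [nq [q A_span]] := ABB_fg_left_span WI WJ I_fin HL.
have supp_annihilated := in_supp_annihilated HG J_sub.
split; first exact: (supported_simple_iso_classes HG HE Hr0 WJ IG AJ_block I_kills A_span
                                                 supp_annihilated).
exact: (simple_part_findim HG HE Hr0 IG AJ_block I_kills A_span supp_annihilated).
Qed.
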